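(* Let $\mathbf u$ be a uniformly recurrent infinite word containing infinitely many (distinct) palindromic factors. Then the following are equivalent: (1) $D(\mathbf u)<\infty$; (2) $\mathbf u$ has only finitely many oddities; (3) there exists an integer $K$ such that every complete return word in $\mathbf u$ of every palindromic factor of $\mathbf u$ of length at least $K$ is a palindrome; (4) there exists an integer $H$ such that for every prefix $f$ of $\mathbf u$ with $|f|\ge H$, the longest palindromic suffix of $f$ occurs exactly once in $f$.
   Context: For a finite word $w$, $\overline{w}$ denotes its reversal; $w$ is a palindrome if $w=\overline w$. The defect of a finite word $w$ is $D(w)=|w|+1-(\text{number of distinct palindromic factors of } w, \text{ including the empty word})$; the defect of an infinite word $\mathbf u$ is $D(\mathbf u)=\sup\{D(w): w \text{ a prefix of }\mathbf u\}$. An infinite word is uniformly recurrent if every factor occurs infinitely often with bounded gaps between consecutive occurrences. For a recurrent word $\mathbf u$ and a factor $w$, a complete return word of $w$ is a factor $v$ of $\mathbf u$ such that $w$ is a prefix and a suffix of $v$ and $w$ occurs in $v$ exactly twice. An oddity of $\mathbf u$ is an unordered pair $\{v,\overline v\}$ with $v\neq\overline v$ such that $v$ or $\overline v$ is a complete return word in $\mathbf u$ of some palindromic factor of $\mathbf u$. *)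

From mathcomp Require Import all_boot.
Set Implicit Arguments. Unset Strict Implicit. Unset Printing Implicit Defensive.

Section Words.
Variable A : finType.

Definition segment (u : nat -> A) (i n : nat) : seq A := mkseq (fun k => u (i + k)) n.

Definition factor (u : nat -> A) (w : seq A) : Prop := exists i, segment u i (size w) = w.

Definition uprefix (u : nat -> A) (n : nat) : seq A := segment u 0 n.

Definition palindrome (w : seq A) : bool := rev w == w.

Definition factors_of (w : seq A) : seq (seq A) :=
  [seq take j (drop i w) | i <- iota 0 (size w).+1, j <- iota 0 (size w - i).+1].

(* number of distinct palindromic factors of w, including the empty word *)
Definition npal (w : seq A) : nat := size (undup [seq x <- factors_of w | palindrome x]).

Definition defect (w : seq A) : nat := (size w).+1 - npal w.

Definition finite_defect (u : nat -> A) : Prop :=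
  exists B, forall n, defect (uprefix u n) <= B.

(* number of occurrences of w in the finite word v (overlapping occurrences counted) *)
Definition occ (w v : seq A) : nat :=
  count (fun i => take (size w) (drop i v) == w) (iota 0 (size v - size w).+1).

Definition uniformly_recurrent (u : nat -> A) : Prop :=
  forall i n, exists L, forall j, exists k, j <= k <= j + L /\ segment u k n = segment u i n.

Definition inf_many_pal (u : nat -> A) : Prop :=
  forall s : seq (seq A), exists w, factor u w /\ palindrome w /\ w \notin s.

Definition complete_return_word (u : nat -> A) (w v : seq A) : Prop :=
  factor u v /\ prefix w v /\ suffix w v /\ occ w v = 2.

Definition crw_of_pal (u : nat -> A) (v : seq A) : Prop :=
  exists p, factor u p /\ palindrome p /\ complete_return_word u p v.

(* v is a member of an oddity {v, rev v} of u *)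
Definition oddity_member (u : nat -> A) (v : seq A) : Prop :=
  rev v != v /\ (crw_of_pal u v \/ crw_of_pal u (rev v)).

(* u has only finitely many oddities: the union of all oddities {v, rev v}
   is contained in a finite list (equivalent to finitely many unordered pairs) *)
Definition finitely_many_oddities (u : nat -> A) : Prop :=
  exists s : seq (seq A), forall v, oddity_member u v -> v \in s.

Definition lps (f : seq A) : seq A :=
  drop (find (fun i => palindrome (drop i f)) (iota 0 (size f).+1)) f.

End Words.

(* The defect grows by one when a letter is appended exactly when the new longest palindromic
   suffix already occurred before, so D(u) is finite iff the longest palindromic suffixes of long
   prefixes are unioccurrent, which gives (4) -> (1). If the defect is bounded by the defect of a
   prefix P, a complete return word v of a palindrome p long enough to contain P keeps the defect
   of v with its last letter removed, so lps v is unioccurrent in v; since lps v is v or p, v is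
   a palindrome: (1) -> (3). Under (3) a long longest palindromic suffix q of a prefix is
   unioccurrent, for an earlier occurrence of q would give a longer palindromic suffix, namely a
   complete return word of q; and uniform recurrence makes q long: two consecutive occurrences
   of a long palindrome p around the end of the prefix bound a palindromic complete return word
   V, the previous occurrence of V bounds a longer palindrome, and its centre is a palindromic
   suffix of the prefix of length at least |p|. Finally (2) <-> (3) because uniform recurrence
   bounds the complete return words of the finitely many short palindromes. *)

From mathcomp Require Import all_boot zify.
From Stdlib Require Import Classical.
Set Implicit Arguments. Unset Strict Implicit. Unset Printing Implicit Defensive.

Section FiniteWords.
Variable A : finType.
Implicit Types (a : A) (f q w x : seq A).

Lemma palindrome_rev x : palindrome (rev x) = palindrome x.
Proof. by rewrite /palindrome revK; apply/eqP/eqP => [<-|->]; rewrite ?revK. Qed.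

Lemma pal_suffix_prefix x q : palindrome x -> palindrome q -> suffix x q -> prefix x q.
Proof. by move=> /eqP px /eqP pq; rewrite -suffix_rev px pq. Qed.

Lemma infix_take_drop i j w : infix (take i (drop j w)) w.
Proof. exact: infix_trans (infix_take _ _) (infix_drop _ _). Qed.

Lemma infix_take_dropP x w :
  infix x w -> exists2 k, k + size x <= size w & take (size x) (drop k w) = x.
Proof.
case/infixP=> s [s' ->]; exists (size s); last by rewrite drop_size_cat // take_size_cat.
by rewrite !size_cat leq_add2l leq_addr.
Qed.

Lemma mem_factors_of w x : (x \in factors_of w) = infix x w.
Proof.
apply/allpairsPdep/idP => [[i [j [_ _ ->]]]|/infixP[s [s' ->]]].
  exact: infix_take_drop.
exists (size s), (size x); rewrite !size_cat !mem_iota drop_size_cat // take_size_cat //.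
by split => //; rewrite add0n ltnS ?addKn leq_addr ?leq_addr.
Qed.

Definition pal_factors w := undup [seq x <- factors_of w | palindrome x].

Lemma mem_pal_factors w x : (x \in pal_factors w) = infix x w && palindrome x.
Proof. by rewrite mem_undup mem_filter mem_factors_of andbC. Qed.

Lemma npal_rev w : npal (rev w) = npal w.
Proof.
apply: perm_size; apply: uniq_perm; rewrite ?undup_uniq // => x.
rewrite -/(pal_factors _) !mem_pal_factors.
by case px: (palindrome x); rewrite ?andbF // -infix_rev (eqP px) revK.
Qed.

Definition lps_start f := find (fun i => palindrome (drop i f)) (iota 0 (size f).+1).

Lemma lpsE f : lps f = drop (lps_start f) f.
Proof. by []. Qed.

Lemma has_pal_drop f : has (fun i => palindrome (drop i f)) (iota 0 (size f).+1).
Proof.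
apply/hasP; exists (size f); first by rewrite mem_iota ltnS leqnn.
by rewrite drop_size.
Qed.

Lemma lps_start_le f : lps_start f <= size f.
Proof. by have := has_pal_drop f; rewrite has_find size_iota. Qed.

Lemma lps_pal f : palindrome (lps f).
Proof.
have := nth_find 0 (has_pal_drop f).
by rewrite -/(lps_start f) nth_iota // ltnS lps_start_le.
Qed.

Lemma lps_start_min f k : k <= size f -> palindrome (drop k f) -> lps_start f <= k.
Proof.
move=> hk hp; rewrite leqNgt; apply/negP => /(before_find 0).
by rewrite nth_iota ?add0n ?hp.
Qed.

Lemma suffix_lps f x : suffix x f -> palindrome x -> suffix x (lps f).
Proof.
rewrite suffixE => /eqP hx px.
have hk : lps_start f <= size f - size x by apply: lps_start_min; rewrite ?leq_subr ?hx.
by rewrite -hx lpsE -(subnK hk) -drop_drop suffix_drop.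
Qed.

Lemma pal_infix_rcons w a x :
  infix x (rcons w a) -> palindrome x -> infix x w \/ x = lps (rcons w a).
Proof.
rewrite infix_rconsl => /orP[hs px|]; last by left.
set q := lps (rcons w a).
have hxq : prefix x q by apply: pal_suffix_prefix (lps_pal _) (suffix_lps hs px).
have [->|neq] := eqVneq x q; [by right | left].
have ltxq : size x < size q.
  rewrite ltn_neqAle size_prefix // andbT; apply: contra neq => /eqP sz.
  by move: hxq; rewrite prefixE sz take_size eq_sym.
have : suffix q (rcons w a) by apply: suffix_drop.
clearbody q; clear neq; case/lastP: q hxq ltxq => [|q' b] hxq; rewrite ?size_rcons // => ltxq.
rewrite suffix_rcons => /andP[_ hq'].
apply: prefix_suffix_trans hq'; move: hxq.
by rewrite !prefixE -cats1 takel_cat.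
Qed.

Lemma npal_rcons w a : npal (rcons w a) = npal w + ~~ infix (lps (rcons w a)) w.
Proof.
set q := lps (rcons w a).
have memE x : (x \in pal_factors (rcons w a)) = (x == q) || (x \in pal_factors w).
  rewrite !mem_pal_factors; apply/idP/idP => [/andP[hx px]|/orP[/eqP->|/andP[hx ->]]].
  - by case: (pal_infix_rcons hx px) => [->|->]; rewrite ?eqxx ?px ?orbT.
  - by rewrite lps_pal andbT suffixW // suffix_drop.
  - by rewrite andbT (infix_trans hx) // infix_rcons.
rewrite /npal -!/(pal_factors _).
case qw: (infix q w); rewrite /= ?addn0 ?addn1.
  apply: perm_size; apply: uniq_perm; rewrite ?undup_uniq // => x.
  by rewrite memE; case: eqP => //= ->; rewrite mem_pal_factors qw lps_pal.
have -> : (size (pal_factors w)).+1 = size (q :: pal_factors w) by [].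
apply: perm_size; apply: uniq_perm => [||x]; last by rewrite memE inE.
  exact: undup_uniq.
by rewrite /= undup_uniq mem_pal_factors qw.
Qed.

Lemma npal_le_size w : npal w <= (size w).+1.
Proof.
elim/last_ind: w => [|w a IH]; first by [].
by rewrite npal_rcons size_rcons; case: (~~ _); lia.
Qed.

Lemma defect_rcons w a : defect (rcons w a) = defect w + infix (lps (rcons w a)) w.
Proof.
rewrite /defect npal_rcons size_rcons; have := npal_le_size w.
by case: (infix _ _) => /=; lia.
Qed.

Lemma defect_rev w : defect (rev w) = defect w.
Proof. by rewrite /defect npal_rev size_rev. Qed.

Lemma defect_infix w x : infix x w -> defect x <= defect w.
Proof.
case/infixP=> s [s' ->]; elim: s => [|a s IH] /=.
  elim/last_ind: s' => [|s' b IH]; first by rewrite cats0.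
  by rewrite -rcons_cat defect_rcons (leq_trans IH) ?leq_addr.
by rewrite -[a :: _]revK rev_cons defect_rev defect_rcons defect_rev (leq_trans IH) ?leq_addr.
Qed.

Lemma occ_rcons q w a : occ q (rcons w a) = occ q w + suffix q (rcons w a).
Proof.
rewrite /occ size_rcons suffixE size_rcons.
have [qw|wq] := leqP (size q) (size w).
  rewrite subSn // -addn1 iotaD count_cat add0n; congr (_ + _).
    apply: eq_in_count => i; rewrite mem_iota => /andP[_ hi].
    rewrite drop_rcons -?cats1 ?takel_cat // ?size_drop; lia.
  by rewrite /= addn0 take_oversize // size_drop size_rcons; lia.
have -> : (size w).+1 - size q = 0 by lia.
have -> : size w - size q = 0 by lia.
rewrite /= !drop0 !take_oversize ?size_rcons ?(ltnW wq) //.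
have /negPf -> : w != q by apply: contraTneq wq => ->; rewrite ltnn.
by rewrite addn0.
Qed.

Lemma occ_gt0 q w : (0 < occ q w) = infix q w.
Proof.
rewrite /occ -has_count; apply/hasP/idP => [[i _ /eqP <-]|/infix_take_dropP[k hk e]].
  exact: infix_take_drop.
by exists k; rewrite ?e // mem_iota; lia.
Qed.

Lemma occ_lps_rcons w a :
  (occ (lps (rcons w a)) (rcons w a) == 1) = ~~ infix (lps (rcons w a)) w.
Proof. by rewrite occ_rcons suffix_drop addn1 eqSS -occ_gt0 lt0n negbK. Qed.

Lemma defect_rcons_occ w a : defect (rcons w a) =
  defect w + (occ (lps (rcons w a)) (rcons w a) != 1).
Proof. by rewrite defect_rcons occ_lps_rcons negbK. Qed.

End FiniteWords.

Lemma last_before (P : pred nat) i j : i < j -> P i ->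
  exists i', [/\ i <= i' < j, P i' & forall k, i' < k < j -> ~~ P k].
Proof.
move=> ij Pi; have exP : exists k, (k < j) && P k by exists i; rewrite ij.
have ubP k : (k < j) && P k -> k <= j by case/andP=> /ltnW.
have [i' /andP[i'j Pi'] maxi'] := ex_maxnP exP ubP.
exists i'; split=> //; first by rewrite i'j andbT maxi' ?ij.
by move=> k /andP[i'k kj]; apply: contraL i'k => Pk; rewrite -leqNgt maxi' // kj.
Qed.

Lemma count_iota_two (P : pred nat) d : 0 < d -> P 0 -> P d ->
  (forall k, 0 < k < d -> ~~ P k) -> count P (iota 0 d.+1) = 2.
Proof.
case: d => // d _ P0 Pd noP; rewrite -addn1 iotaD count_cat /= P0 Pd.
rewrite (eq_in_count (a2 := pred0)) ?count_pred0 // => k; rewrite mem_iota => hk.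
by apply/negbTE/noP; lia.
Qed.

Lemma uniq_leq_count (P : pred nat) m l :
  uniq l -> all P l -> all (fun i => i < m) l -> size l <= count P (iota 0 m).
Proof.
move=> ul /allP lP /allP lm; rewrite -size_filter; apply: uniq_leq_size => // i il.
by rewrite mem_filter lP // mem_iota /= add0n lm.
Qed.

Lemma bounded_fun_max (f : nat -> nat) B :
  (forall n, f n <= B) -> exists n0, forall n, f n <= f n0.
Proof.
move=> fB; suff fmax d m : B - f m <= d -> exists n0, forall n, f n <= f n0.
  exact: fmax B 0 (leq_subr _ _).
elim: d m => [|d IH] m hm.
  by exists m => n; have := fB n; lia.
case: (classic (exists n, f m < f n)) => [[n hn]|nobigger]; first by apply: (IH n); lia.
by exists m => n; rewrite leqNgt; apply/negP => hn; apply: nobigger; exists n.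
Qed.

Lemma monotone_bound_seq (T : eqType) (s : seq T) (P : T -> nat -> Prop) :
  (forall x M N, M <= N -> P x M -> P x N) ->
  (forall x, x \in s -> exists M, P x M) -> exists M, forall x, x \in s -> P x M.
Proof.
move=> Pmono; elim: s => [|y s IH] bounded; first by exists 0.
have [My PyM] := bounded y (mem_head y s).
have [Ms PsM] : exists M, forall x, x \in s -> P x M.
  by apply: IH => x xs; apply: bounded; rewrite inE xs orbT.
exists (maxn My Ms) => x; rewrite inE => /predU1P[->|xs].
  exact: Pmono (leq_maxl _ _) PyM.
exact: Pmono (leq_maxr _ _) (PsM x xs).
Qed.

Definition words_upto (A : finType) M : seq (seq A) :=
  flatten [seq [seq tval t | t : n.-tuple A] | n <- iota 0 M.+1].

Lemma mem_words_upto (A : finType) M (s : seq A) : size s <= M -> s \in words_upto A M.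
Proof.
move=> sM; apply/flatten_mapP; exists (size s); first by rewrite mem_iota ltnS sM.
by apply/mapP; exists (in_tuple s); rewrite ?mem_enum.
Qed.

Section Segments.
Variables (A : finType) (u : nat -> A).
Implicit Types (p q v w x : seq A).

Lemma size_segment i n : size (segment u i n) = n.
Proof. exact: size_mkseq. Qed.

Lemma nth_segment d i n k : k < n -> nth d (segment u i n) k = u (i + k).
Proof. by move=> hk; rewrite /segment nth_mkseq. Qed.

Lemma eq_segment i j n :
  (forall k, k < n -> u (i + k) = u (j + k)) -> segment u i n = segment u j n.
Proof.
by move=> h; rewrite /segment /mkseq; apply/eq_in_map => k; rewrite mem_iota => /andP[_ /h].
Qed.

Lemma segment_eqP i j n :
  segment u i n = segment u j n -> forall k, k < n -> u (i + k) = u (j + k).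
Proof. by move=> e k hk; rewrite -(nth_segment (u 0) i hk) e nth_segment. Qed.

Lemma segment_add i m n : segment u i (m + n) = segment u i m ++ segment u (i + m) n.
Proof.
rewrite /segment /mkseq iotaD map_cat add0n -{2}[m]addn0 iotaDl -map_comp.
by congr (_ ++ _); apply: eq_map => k /=; rewrite addnA.
Qed.

Lemma segment_rcons i n : segment u i n.+1 = rcons (segment u i n) (u (i + n)).
Proof. by rewrite -addn1 segment_add -cats1 /segment /mkseq /= addn0. Qed.

Lemma uprefixS n : uprefix u n.+1 = rcons (uprefix u n) (u n).
Proof. exact: segment_rcons. Qed.

Lemma take_segment i n m : m <= n -> take m (segment u i n) = segment u i m.
Proof. by move=> h; rewrite -(subnKC h) segment_add take_size_cat ?size_segment. Qed.

Lemma drop_segment i n m : drop m (segment u i n) = segment u (i + m) (n - m).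
Proof.
have [h|h] := leqP m n.
  by rewrite -{1}(subnKC h) segment_add drop_size_cat ?size_segment.
by rewrite drop_oversize ?size_segment ?(ltnW h) // (eqP (ltnW h)) /segment.
Qed.

Lemma factor_segment i n : factor u (segment u i n).
Proof. by exists i; rewrite size_segment. Qed.

Lemma infix_segment i n k m :
  i <= k -> k + m <= i + n -> infix (segment u k m) (segment u i n).
Proof.
move=> h1 h2; rewrite (_ : segment u k m = take m (drop (k - i) (segment u i n))).
  exact: infix_take_drop.
by rewrite drop_segment take_segment ?subnKC //; lia.
Qed.

Lemma infix_segmentP x i n : infix x (segment u i n) ->
  exists2 k, k + size x <= n & segment u (i + k) (size x) = x.
Proof.
case/infix_take_dropP; rewrite size_segment => k hk e; exists k => //.
by rewrite -[RHS]e drop_segment take_segment //; lia.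
Qed.
End Segments.

Section Occurrences.
Variables (A : finType) (u : nat -> A).
Implicit Types (p q v w : seq A).

Lemma palindrome_segmentP a n :
  reflect (forall k, k < n -> u (a + k) = u (a + (n - k.+1))) (palindrome (segment u a n)).
Proof.
apply: (iffP eqP) => [hp k hk|h].
  rewrite -(nth_segment u (u 0) a hk) -hp nth_rev ?size_segment // nth_segment //; lia.
apply: (@eq_from_nth _ (u 0)); rewrite ?size_rev // => k; rewrite size_segment => hk.
rewrite nth_rev ?size_segment // !nth_segment //; last by lia.
by rewrite [RHS]h.
Qed.

Lemma palindrome_segment_central a n k : palindrome (segment u a n) -> 2 * k <= n ->
  palindrome (segment u (a + k) (n - 2 * k)).
Proof.
move=> /palindrome_segmentP hp hk; apply/palindrome_segmentP => i hi.
by rewrite -!addnA hp; [congr u|]; lia.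
Qed.

Lemma occ_segment w a n : size w <= n -> occ w (segment u a n) =
  count (fun k => segment u (a + k) (size w) == w) (iota 0 (n - size w).+1).
Proof.
move=> wn; rewrite /occ size_segment; apply: eq_in_count => k; rewrite mem_iota => hk.
by rewrite drop_segment take_segment //; lia.
Qed.

Lemma crw_segment w i j : i < j ->
  segment u i (size w) = w -> segment u j (size w) = w ->
  (forall k, i < k < j -> segment u k (size w) != w) ->
  complete_return_word u w (segment u i (j - i + size w)).
Proof.
move=> ij hi hj between; split; [exact: factor_segment|split; [|split]].
- by rewrite prefixE take_segment ?hi ?leq_addl.
- by rewrite suffixE size_segment addnK drop_segment subnKC ?(ltnW ij) // addKn hj.
rewrite occ_segment ?leq_addl // addnK count_iota_two ?subn_gt0 //.
- by rewrite addn0 hi.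
- by rewrite subnKC ?(ltnW ij) // hj.
by move=> k hk; apply: between; lia.
Qed.

Lemma crw_inv w v : complete_return_word u w v ->
  exists z, [/\ v = segment u z (size v), size w < size v,
     segment u z (size w) = w, segment u (z + (size v - size w)) (size w) = w &
     forall k, 0 < k < size v - size w -> segment u (z + k) (size w) != w].
Proof.
case=> [[z hv] [hp [hs ho]]]; exists z; rewrite hv.
have wv : size w <= size v by apply: size_prefix hp.
have hz : segment u z (size w) = w by move: hp; rewrite prefixE -hv take_segment // => /eqP.
have hend : segment u (z + (size v - size w)) (size w) = w.
  by move: hs; rewrite suffixE -hv drop_segment size_segment subKn // => /eqP.
have lt_wv : size w < size v.
  rewrite ltn_neqAle wv andbT; apply/eqP => e; move: ho.
  by rewrite -hv occ_segment -e ?subnn //= !addn0 hz eqxx.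
split=> // k /andP[k0 kd]; apply/negP => /eqP hk.
have : size [:: 0; k; size v - size w] <= occ w (segment u z (size v)).
  rewrite occ_segment //; apply: uniq_leq_count => /=.
  - by rewrite !inE andbT; apply/andP; split; [apply/norP; split|]; apply/eqP; lia.
  - by rewrite addn0 hz hk hend eqxx.
  - by rewrite !ltnS andbT; apply/andP; split; lia.
by rewrite hv ho.
Qed.

Lemma crw_last_before w i j : i < j ->
  segment u i (size w) = w -> segment u j (size w) = w ->
  exists i', [/\ i <= i' < j, segment u i' (size w) = w,
    forall k, i' < k < j -> segment u k (size w) != w &
    complete_return_word u w (segment u i' (j - i' + size w))].
Proof.
move=> ij hi hj.
have [i' [ii' /eqP hi' between]] :=
  last_before (P := fun k => segment u k (size w) == w) ij (introT eqP hi).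
by exists i'; split=> //; apply: crw_segment => //; case/andP: ii'.
Qed.

(* If the factor of length [j - i + |w|] at [i] reappears at [i2 < i], then [w] reappears at
   [i + (i - i2)]; this must not fall strictly between two consecutive occurrences [i < j]. *)
Lemma return_gap w i j i2 : i2 < i ->
  segment u i (size w) = w -> (forall k, i < k < j -> segment u k (size w) != w) ->
  segment u i2 (j - i + size w) = segment u i (j - i + size w) -> j - i <= i - i2.
Proof.
move=> i2i hi between e; rewrite leqNgt; apply/negP => short.
have : i < i + (i - i2) < j by apply/andP; split; lia.
move/between/negP; apply.
rewrite -[X in _ == X]hi; apply/eqP/eq_segment => t ht.
have := segment_eqP e (k := i - i2 + t); rewrite -addnA => <-; last by lia.
by congr u; lia.
Qed.

Lemma size_lps_central a n len : palindrome (segment u a len) ->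
  n <= a + len -> 2 * (a + len - n) <= len ->
  len - 2 * (a + len - n) <= size (lps (uprefix u n)).
Proof.
move=> hp n_le k_le; set k := a + len - n in k_le *.
have hc := palindrome_segment_central hp k_le.
have : lps_start (uprefix u n) <= a + k.
  apply: lps_start_min; first by rewrite (size_segment u); lia.
  by rewrite drop_segment add0n (_ : n - (a + k) = len - 2 * k) //; lia.
by rewrite lpsE size_drop (size_segment u); lia.
Qed.

Lemma consecutive_occurrences w G x :
  (forall y, exists k, y <= k <= y + G /\ segment u k (size w) = w) -> G <= x ->
  exists i j, [/\ x - G <= i <= x, x < j <= x + G.+1, segment u i (size w) = w,
    segment u j (size w) = w & forall k, i < k < j -> segment u k (size w) != w].
Proof.
move=> window Gx.
have [j' [/andP[xj' j'G] hj']] := window x.+1.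
have exj : exists j, (x < j) && (segment u j (size w) == w) by exists j'; rewrite xj' hj' eqxx.
have [j /andP[xj /eqP hj] jmin] := ex_minnP exj.
have jj' : j <= j' by rewrite jmin // xj' hj' eqxx.
have [k [/andP[k1 k2] hk]] := window (x - G).
have kj : k < j by lia.
have [i [/andP[ki ij] hi between]] := crw_last_before kj hk hj.
have ix : i <= x.
  rewrite leqNgt; apply/negP => xi.
  by have := jmin i; rewrite xi hi eqxx => /(_ isT); lia.
by exists i, j; split=> //; apply/andP; split; lia.
Qed.
End Occurrences.

Section UniformRecurrence.
Variables (A : finType) (u : nat -> A).
Implicit Types (p v w : seq A).

Lemma first_occurrence_bounded l : exists M, forall w, size w <= l -> factor u w ->
  exists2 i, i < M & segment u i (size w) = w.
Proof.
have [M hM] : exists M, forall w, w \in words_upto A l -> factor u w ->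
    exists2 i, i < M & segment u i (size w) = w.
  apply: monotone_bound_seq => [w M N MN hM /hM[i iM hi]|w _].
    by exists i => //; apply: leq_trans MN.
  case: (classic (factor u w)) => [[i hi]|nf]; last by exists 0.
  by exists i.+1 => _; exists i.
by exists M => w /mem_words_upto /hM.
Qed.

Lemma long_palindrome K : inf_many_pal u ->
  exists p, [/\ factor u p, palindrome p & K <= size p].
Proof.
move=> /(_ (words_upto A K.-1)) [p [hf [hp hn]]]; exists p; split=> //.
by rewrite leqNgt; apply: contra hn => lt; rewrite mem_words_upto // -ltnS prednK //; lia.
Qed.

Hypothesis hUR : uniformly_recurrent u.

Lemma crw_size_bounded p : exists M, forall v, complete_return_word u p v -> size v <= M.
Proof.
case: (classic (factor u p)) => [[i0 hi0]|nf]; last first.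
  exists 0 => v /crw_inv[z [_ _ hz _ _]].
  by case: nf; exists z.
have [L hL] := hUR i0 (size p).
exists (size p + L + 1) => v /crw_inv[z [_ lt_pv _ _ between]].
have [k [/andP[k1 k2] hk]] := hL z.+1.
have hk' : segment u (z + (k - z)) (size p) = p by rewrite subnKC ?hk // ltnW.
rewrite leqNgt; apply/negP => big.
have : 0 < k - z < size v - size p by apply/andP; split; lia.
by move/between; rewrite hk' eqxx.
Qed.
End UniformRecurrence.

Section Equivalences.
Variables (A : finType) (u : nat -> A).
Implicit Types (p q v w : seq A).

Definition crw_pal_from K := forall p v, factor u p -> palindrome p -> K <= size p ->
  complete_return_word u p v -> palindrome v.

Lemma crw_lps p v : palindrome p -> complete_return_word u p v -> lps v = v \/ lps v = p.
Proof.
move=> hp /crw_inv[z [hv lt_pv hz hend between]].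
have hpv : drop (size v - size p) v = p.
  by rewrite hv drop_segment size_segment subKn ?(ltnW lt_pv).
have t_le : lps_start v <= size v - size p by apply: lps_start_min; rewrite ?leq_subr ?hpv.
have [t0|t_gt0] := posnP (lps_start v); first by left; rewrite lpsE t0 drop0.
have [t_lt|t_eq] := ltnP (lps_start v) (size v - size p); last first.
  by right; rewrite lpsE (_ : lps_start v = size v - size p) //; apply/eqP; rewrite eqn_leq t_le.
exfalso; have /negP := between (lps_start v) (introT andP (conj t_gt0 t_lt)); apply.
have : prefix p (lps v).
  apply: (pal_suffix_prefix hp (lps_pal v)); apply: suffix_lps hp.
  by rewrite -{1}hpv suffix_drop.
have szp : size p <= size v - lps_start v by lia.
by rewrite prefixE lpsE [X in drop _ X]hv drop_segment take_segment.
Qed.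

Lemma finite_defect_crw_pal :
  uniformly_recurrent u -> finite_defect u -> exists K, crw_pal_from K.
Proof.
move=> hUR [B hB].
have [n0 n0max] := bounded_fun_max hB.
have [L hL] := hUR 0 n0.
exists (L + n0).+1 => p v _ hp hK hc.
have [lps_v|lps_p] := crw_lps hp hc; first by rewrite -lps_v lps_pal.
have [z [hv lt_pv hz hend between]] := crw_inv hc.
set w := segment u z (size v).-1.
have hw : v = rcons w (u (z + (size v).-1)) by rewrite -segment_rcons prednK; [exact: hv | lia].
have [k [/andP[zk kL] hk]] := hL z.
have dw : defect (uprefix u n0) <= defect w.
  by rewrite /uprefix -hk; apply: defect_infix; apply: infix_segment; lia.
have dv : defect v <= defect (uprefix u n0).
  apply: leq_trans (n0max (z + size v)); rewrite {1}hv /uprefix.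
  by apply: defect_infix; apply: infix_segment.
have : occ (lps v) v = 1.
  apply/eqP; move: (defect_rcons_occ w (u (z + (size v).-1))).
  by rewrite -hw; case: eqP; lia.
rewrite lps_p {1}hv occ_segment ?size_segment ?(ltnW lt_pv) //.
rewrite (count_iota_two (d := size v - size p)) //.
- by rewrite subn_gt0.
- by rewrite addn0 hz.
- by rewrite hend.
Qed.

Lemma oddities_crw_pal : finitely_many_oddities u -> exists K, crw_pal_from K.
Proof.
case=> s odd_s; exists (\max_(v <- s) size v).+1 => p v hf hp hK hc.
apply/negPn/negP => npal_v.
have vs : v \in s by apply: odd_s; split=> //; left; exists p.
have [z [_ lt_pv _ _ _]] := crw_inv hc.
have := leq_trans (@leq_bigmax_seq _ s predT size v vs isT) (ltnW hK).
by rewrite leqNgt lt_pv.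
Qed.

Lemma crw_pal_oddities K :
  uniformly_recurrent u -> crw_pal_from K -> finitely_many_oddities u.
Proof.
move=> hUR hK.
have [M hM] : exists M, forall p, p \in words_upto A K -> forall v,
    complete_return_word u p v -> size v <= M.
  apply: monotone_bound_seq => [p M N MN hM v /hM /leq_trans|p _]; first exact.
  exact: crw_size_bounded.
have short v : ~~ palindrome v -> crw_of_pal u v -> size v <= M.
  move=> npal_v [p [hf [hp hc]]]; apply: (hM _ _ _ hc); apply: mem_words_upto.
  by rewrite leqNgt; apply: contraNN npal_v => /ltnW Kp; apply: hK hc.
exists (words_upto A M) => v [npal_v [hc|hc]]; apply: mem_words_upto.
  exact: short.
by rewrite -size_rev; apply: short; rewrite ?palindrome_rev.
Qed.

Lemma lps_unioccurrent_finite_defect H :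
  (forall n, H <= n -> occ (lps (uprefix u n)) (uprefix u n) = 1) -> finite_defect u.
Proof.
move=> uniocc; exists H.+1 => n.
have stable d : defect (uprefix u (H + d)) = defect (uprefix u H).
  elim: d => [|d IH]; first by rewrite addn0.
  rewrite addnS uprefixS defect_rcons_occ -uprefixS uniocc; last by rewrite -addnS leq_addr.
  by rewrite eqxx addn0.
apply: (@leq_trans (defect (uprefix u (H + n)))).
  by apply: defect_infix; apply: infix_segment; lia.
by rewrite stable /defect /uprefix (size_segment u) leq_subr.
Qed.

Lemma lps_unioccurrent K n : crw_pal_from K -> K <= size (lps (uprefix u n)) ->
  occ (lps (uprefix u n)) (uprefix u n) = 1.
Proof.
case: n => [//|n] hK Kq; apply/eqP; rewrite uprefixS occ_lps_rcons -uprefixS.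
apply/negP => /infix_segmentP[k kq]; rewrite add0n => hk; move: hk kq Kq.
set f := uprefix u n.+1; set q := lps f => hk kq Kq.
have hq : q = segment u (lps_start f) (n.+1 - lps_start f) by rewrite /q lpsE /f drop_segment.
have ht : segment u (lps_start f) (size q) = q by rewrite hq (size_segment u).
have kt : k < lps_start f by move: kq; rewrite hq (size_segment u); lia.
have [i [/andP[_ it] _ _ hc]] := crw_last_before kt hk ht.
have pal_seg : palindrome (segment u i (lps_start f - i + size q)).
  by apply: (hK q _ _ (lps_pal f) Kq hc); rewrite hq; apply: factor_segment.
suff : lps_start f <= i by rewrite leqNgt it.
have sz_f : size f = n.+1 by rewrite (size_segment u).
apply: lps_start_min; first by have := lps_start_le f; lia.
rewrite /f drop_segment add0n (_ : n.+1 - i = lps_start f - i + size q) //.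
by rewrite hq (size_segment u); have := lps_start_le f; lia.
Qed.

Lemma long_lps K : uniformly_recurrent u -> inf_many_pal u -> crw_pal_from K ->
  exists H, forall n, H <= n -> K <= size (lps (uprefix u n)).
Proof.
move=> hUR hpal hK.
have [p [[i0 hp0] hp Kp]] := long_palindrome K hpal.
set m := size p in hp0 Kp *.
have [G hG] := hUR i0 m.
have window y : exists k, y <= k <= y + G /\ segment u k m = p.
  by have [k [hk e]] := hG y; exists k; rewrite e hp0.
have [M hM] := first_occurrence_bounded u (G + G.+1 + m).
exists (M + G + m) => n hn.
have Gx : G <= n - m by lia.
have [i [j [/andP[ilo ihi] /andP[jlo jhi] hi hj between]]] :=
  consecutive_occurrences window Gx.
have ij : i < j by lia.
set V := segment u i (j - i + m).
have sV : size V = j - i + m by rewrite (size_segment u).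
have palV : palindrome V.
  by apply: (hK p) (crw_segment ij hi hj between) => //; exists i0.
have short_V : size V <= G + G.+1 + m by lia.
have [i1 i1M hi1] := hM V short_V (factor_segment u i _).
have i1i : i1 < i by lia.
have hVi : segment u i (size V) = V by rewrite sV.
have [i2 [/andP[_ i2i] hi2 _ hc2]] := crw_last_before i1i hi1 hVi.
have palV2 : palindrome (segment u i2 (i - i2 + size V)).
  by apply: (hK V) hc2 => //; [apply: factor_segment | lia].
have gap : j - i <= i - i2 by apply: (return_gap i2i hi between); rewrite -sV hi2.
rewrite sV in palV2.
apply: leq_trans (size_lps_central palV2 _ _); lia.
Qed.
End Equivalences.

Theorem theorem3p4 (A : finType) (u : nat -> A) :
  uniformly_recurrent u -> inf_many_pal u ->
  [<-> finite_defect u;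
       finitely_many_oddities u;
       exists K : nat, forall p v : seq A, factor u p -> palindrome p -> K <= size p ->
         complete_return_word u p v -> palindrome v;
       exists H : nat, forall n : nat, H <= n ->
         occ (lps (uprefix u n)) (uprefix u n) = 1].
Proof.
move=> hUR hpal; tfae.
- by move=> /(finite_defect_crw_pal hUR) [K /(crw_pal_oddities hUR)].
- exact: oddities_crw_pal.
- case=> K hK; have [H hH] := long_lps hUR hpal hK.
  by exists H => n /hH; apply: lps_unioccurrent hK.
- by case=> H; apply: lps_unioccurrent_finite_defect.
Qed.
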